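(* If $\boldsymbol x^*$ is a pure Nash equilibrium of $\mathcal L(n,S)$, then for every $y\in S$, \[ \min_{i\in N}d(x_i^*,y)\le\frac{2\Lambda}{n}, \] where $\Lambda=\lambda(S)$.
   Context: Network: $(V,E)$ is a finite connected graph with no vertex of degree $2$; each edge $e$ has a length $\lambda(e)>0$. $S$ is the metric measure space obtained by identifying each edge with a segment of length $\lambda(e)$, with length measure $\lambda$ and shortest-path distance $d$. Location game $\mathcal L(n,S)$ with players $N=\{1,\dots,n\}$: each player chooses a point of $S$. Consumers are distributed according to $\lambda$, and each shops at a closest occupied location. Consumers equidistant from several closest occupied locations are split equally among those locations, and the share of a location is split equally among the players located there. Payoff is the mass of consumers attracted. Nash equilibria are pure. *)

From Stdlib Require Import Reals List ClassicalEpsilon.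
From mathcomp Require Import all_boot.

Set Implicit Arguments.
Unset Strict Implicit.
Unset Printing Implicit Defensive.

Local Open Scope R_scope.

Record network := Network {
  vert : finType;
  edge : finType;
  src : edge -> vert;
  tgt : edge -> vert;
  len : edge -> R
}.

(* Points of the metric graph S: a vertex, or an interior point of an edge
   e at distance t from src e (valid when 0 < t < len e). *)
Inductive point (G : network) : Type :=
  | Vtx (v : vert G)
  | Int (e : edge G) (t : R).
Arguments Vtx {G} v.
Arguments Int {G} e t.

Definition valid_point (G : network) (p : point G) : Prop :=
  match p with
  | Vtx _ => True
  | Int e t => 0 < t < len e
  end.

Definition point_eq_dec (G : network) (p q : point G) : {p = q} + {p <> q}.
Proof.
  decide equality; try apply Req_EM_T; apply: eq_comparable.
Defined.

(* degree of a vertex (the graph has no loops, see hypotheses of the theorem) *)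
Definition degree (G : network) (v : vert G) : nat :=
  #|[pred e : edge G | (src e == v) || (tgt e == v)]|.

Inductive walk_len (G : network) : vert G -> vert G -> R -> Prop :=
  | walk_nil u : walk_len u u 0
  | walk_fwd e w L : walk_len (tgt e) w L -> walk_len (src e) w (len e + L)
  | walk_bwd e w L : walk_len (src e) w L -> walk_len (tgt e) w (len e + L).

Definition connected_graph (G : network) : Prop :=
  forall u v : vert G, exists L, walk_len u v L.

Definition end_dist (G : network) (p : point G) (a : vert G) (r : R) : Prop :=
  match p with
  | Vtx v => a = v /\ r = 0
  | Int e t => (a = src e /\ r = t) \/ (a = tgt e /\ r = len e - t)
  end.

Definition path_len (G : network) (p q : point G) (L : R) : Prop :=
  (exists e s t, p = Int e s /\ q = Int e t /\ L = Rabs (s - t)) \/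
  (exists a b r1 L0 r2,
      end_dist p a r1 /\ walk_len a b L0 /\ end_dist q b r2 /\ L = r1 + L0 + r2).

Definition dist (G : network) (p q : point G) : R :=
  epsilon (inhabits 0)
    (fun r => path_len p q r /\ forall L, path_len p q L -> r <= L).

Definition total_length (G : network) : R :=
  fold_right Rplus 0 (List.map (@len G) (enum (edge G))).

(* Strategy profiles: players are 0, ..., n-1 *)
Definition profile (G : network) := nat -> point G.

Definition valid_profile (G : network) (n : nat) (x : profile G) : Prop :=
  forall i, (i < n)%N -> valid_point (x i).

Definition update (G : network) (x : profile G) (i : nat) (p : point G) : profile G :=
  fun j => if Nat.eqb j i then p else x j.

(* min_{i in N} d(x_i, y)  (for n >= 1) *)
Definition mind (G : network) (n : nat) (x : profile G) (y : point G) : R :=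
  fold_right Rmin (dist (x 0%nat) y)
    (List.map (fun i => dist (x i) y) (List.seq 0 n)).

Definition closest_players (G : network) (n : nat) (x : profile G) (y : point G) :=
  List.filter (fun j => if Req_EM_T (dist (x j) y) (mind n x y) then true else false)
    (List.seq 0 n).

Definition n_closest_locs (G : network) (n : nat) (x : profile G) (y : point G) : nat :=
  length (nodup (@point_eq_dec G) (List.map x (closest_players n x y))).

Definition n_colocated (G : network) (n : nat) (x : profile G) (i : nat) : nat :=
  length (List.filter (fun j => if point_eq_dec (x j) (x i) then true else false)
            (List.seq 0 n)).

Definition share (G : network) (n : nat) (x : profile G) (i : nat) (y : point G) : R :=
  if Req_EM_T (dist (x i) y) (mind n x y)
  then / (INR (n_closest_locs n x y) * INR (n_colocated n x i))
  else 0.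

(* Riemann integral of f on [a,b] (0 if f is not Riemann integrable). *)
Definition integral (f : R -> R) (a b : R) : R :=
  match excluded_middle_informative (inhabited (Riemann_integrable f a b)) with
  | left h => RiemannInt (epsilon h (fun _ => True))
  | right _ => 0
  end.

(* payoff: lambda-mass of consumers attracted, integrating edge by edge *)
Definition payoff (G : network) (n : nat) (x : profile G) (i : nat) : R :=
  fold_right Rplus 0
    (List.map (fun e => integral (fun t => share n x i (Int e t)) 0 (len e))
       (enum (edge G))).

Definition nash_eq (G : network) (n : nat) (x : profile G) : Prop :=
  valid_profile n x /\
  forall i (p : point G), (i < n)%N -> valid_point p ->
    payoff n (update x i p) i <= payoff n x i.

(* Shares of a consumer add up to at most one, so the payoffs add up to at most [Λ] and some
   player [i] earns at most [Λ/n].  If some point [y] were at distance more than [2 r] from every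
   player, with [r > Λ/n], then [i] could move to [y]: it would become the only closest location
   for all consumers in the ball of radius [r] around [y], and this ball has measure at least [r]
   since it contains the last stretch of length [r] of a geodesic from the old location of [i]
   to [y].  This contradicts the equilibrium property.  Payoffs are Riemann integrals, which
   exist because along an edge all distances are min-max combinations of affine functions, so
   shares are piecewise constant. *)

From Stdlib Require Import Reals List Lra Lia Wf_nat ClassicalEpsilon.
From mathcomp Require Import all_boot.
Set Implicit Arguments.
Unset Strict Implicit.
Local Open Scope R_scope.

(** * Finite sums and minima of reals *)

Definition sumR (A : Type) (g : A -> R) (l : list A) : R := fold_right Rplus 0 (List.map g l).

Lemma sumR_nil (A : Type) (g : A -> R) : sumR g nil = 0.
Proof. reflexivity. Qed.

Lemma sumR_cons (A : Type) (g : A -> R) a l : sumR g (a :: l) = g a + sumR g l.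
Proof. reflexivity. Qed.

Lemma sumR_ext (A : Type) (g h : A -> R) l :
  (forall a, In a l -> g a = h a) -> sumR g l = sumR h l.
Proof.
  induction l as [|a l IH]; intros H; [reflexivity|]. rewrite !sumR_cons.
  rewrite H; [|left; auto]. rewrite IH; auto. intros; apply H; right; auto.
Qed.

Lemma sumR_le (A : Type) (g h : A -> R) l :
  (forall a, In a l -> g a <= h a) -> sumR g l <= sumR h l.
Proof.
  induction l as [|a l IH]; intros H; [apply Rle_refl|]. rewrite !sumR_cons.
  apply Rplus_le_compat; [apply H; left; auto| apply IH; intros; apply H; right; auto].
Qed.

Lemma sumR_const (A : Type) c (l : list A) : sumR (fun _ => c) l = INR (length l) * c.
Proof.
  induction l as [|a l IH]; [rewrite sumR_nil /=; ring|].
  rewrite sumR_cons IH. change (length (a :: l)) with (S (length l)). rewrite S_INR. ring.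
Qed.

Lemma sumR_ge0 (A : Type) (g : A -> R) l : (forall a, In a l -> 0 <= g a) -> 0 <= sumR g l.
Proof.
  intros H. replace 0 with (sumR (fun _ : A => 0) l) by (rewrite sumR_const; ring).
  apply sumR_le; auto.
Qed.

Lemma sumR_lt (A : Type) (g h : A -> R) l :
  l <> nil -> (forall a, In a l -> g a < h a) -> sumR g l < sumR h l.
Proof.
  destruct l as [|a l]; [tauto|]. intros _ H. rewrite !sumR_cons.
  apply Rplus_lt_le_compat; [apply H; left; auto|].
  apply sumR_le; intros; left; apply H; right; auto.
Qed.

Lemma sumR_scale (A : Type) (g : A -> R) c l : sumR (fun a => c * g a) l = c * sumR g l.
Proof. induction l as [|a l IH]; [rewrite !sumR_nil; ring| rewrite !sumR_cons IH; ring]. Qed.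

Lemma sumR_filter (A : Type) (g : A -> R) (P : A -> bool) l :
  sumR (fun a => if P a then g a else 0) l = sumR g (List.filter P l).
Proof.
  induction l as [|a l IH]; [reflexivity|]. simpl List.filter.
  rewrite sumR_cons IH. destruct (P a); rewrite ?sumR_cons; ring.
Qed.

Lemma sumR_split (A : Type) (g : A -> R) (P : A -> bool) l :
  sumR g l = sumR g (List.filter P l) + sumR g (List.filter (fun a => negb (P a)) l).
Proof.
  induction l as [|a l IH]; [rewrite /= sumR_nil; ring|]. simpl List.filter.
  rewrite sumR_cons IH. destruct (P a); rewrite /= ?sumR_cons; ring.
Qed.

Lemma sumR_swap (A B : Type) (g : A -> B -> R) (l1 : list A) (l2 : list B) :
  sumR (fun a => sumR (g a) l2) l1 = sumR (fun b => sumR (fun a => g a b) l1) l2.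
Proof.
  induction l1 as [|a l1 IH].
  - rewrite sumR_nil -(Rmult_0_r (INR (length l2))) -sumR_const. by apply sumR_ext.
  - rewrite sumR_cons IH. clear IH.
    induction l2 as [|b l2 IH2]; [rewrite !sumR_nil; ring|]. rewrite !sumR_cons -IH2. ring.
Qed.

Lemma sumR_incl_le (T : eqType) (m : T -> R) (C L : list T) :
  (forall a, 0 <= m a) -> NoDup C -> incl C L -> sumR m C <= sumR m L.
Proof.
  intros Hm. revert C. induction L as [|a L IH]; intros C HC Hinc.
  { destruct C as [|c C]; [apply Rle_refl| destruct (Hinc c (or_introl erefl))]. }
  rewrite (sumR_split m (fun c => c == a)) sumR_cons.
  apply Rplus_le_compat.
  - have Hsub : incl (List.filter (fun c => c == a) C) (a :: nil).
    { intros c Hc. apply filter_In in Hc. destruct Hc as [_ Hc]. move/eqP: Hc => ->. left; auto. }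
    have Hlen := NoDup_incl_length (NoDup_filter _ HC) Hsub.
    destruct (List.filter (fun c => c == a) C) as [|b [|b' l]] eqn:E; simpl in Hlen; try lia.
    + rewrite sumR_nil. apply Hm.
    + destruct (Hsub b (or_introl erefl)) as [<-|[]].
      rewrite sumR_cons sumR_nil Rplus_0_r. apply Rle_refl.
  - apply IH; [apply NoDup_filter; auto|].
    intros c Hc. apply filter_In in Hc. destruct Hc as [Hc Hna].
    destruct (Hinc c Hc) as [<-|]; auto. by rewrite eqxx in Hna.
Qed.

Lemma fold_Rmin_le (A : Type) (f : A -> R) m0 l a :
  In a l -> fold_right Rmin m0 (List.map f l) <= f a.
Proof.
  induction l as [|b l IH]; [intros []|]. intros [<-|H]; [apply Rmin_l|].
  eapply Rle_trans; [apply Rmin_r| auto].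
Qed.

Lemma fold_Rmin_glb (A : Type) (f : A -> R) m0 l c :
  c <= m0 -> (forall a, In a l -> c <= f a) -> c <= fold_right Rmin m0 (List.map f l).
Proof.
  induction l as [|a l IH]; simpl; auto. intros Hs H. apply Rmin_glb; auto.
Qed.

Lemma Rinv_nonneg (r : R) : 0 <= r -> 0 <= / r.
Proof. intros [H|<-]; [left; apply Rinv_0_lt_compat; auto| rewrite Rinv_0; lra]. Qed.

Lemma Rmin_le_split (r d u l : R) : 0 <= u -> 0 <= l -> d <= l + u ->
  Rmin r d <= Rmin l (Rmax 0 (r - u)) + Rmin r u.
Proof. intros. rewrite /Rmin /Rmax. repeat destruct (Rle_dec _ _); lra. Qed.

Lemma filter_singleton (A : Type) (P : A -> bool) l a :
  NoDup l -> In a l -> P a -> (forall b, In b l -> P b -> b = a) -> List.filter P l = a :: nil.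
Proof.
  intros Hl Ha Pa Huniq. induction l as [|b l IH]; [destruct Ha|]. apply NoDup_cons_iff in Hl.
  destruct Hl as [Hb Hl]. rewrite /=. case Pb: (P b).
  - have Eb := Huniq b (or_introl erefl) Pb. subst b. f_equal.
    destruct (List.filter P l) as [|c l'] eqn:E; auto.
    have Hc : In c (List.filter P l) by rewrite E; left.
    apply filter_In in Hc. destruct Hc as [Hc Pc].
    exfalso. apply Hb. by rewrite -(Huniq c (or_intror Hc) Pc).
  - destruct Ha as [<-|Ha]; [by rewrite Pb in Pa|].
    apply IH; auto. intros c Hc; apply Huniq; right; auto.
Qed.

Definition has_min (P : R -> Prop) : Prop :=
  (exists x, P x) -> exists m, P m /\ forall x, P x -> m <= x.

Lemma has_min_ext (P Q : R -> Prop) : (forall x, P x <-> Q x) -> has_min P -> has_min Q.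
Proof.
  intros E H [x Hx]. destruct H as [m [H1 H2]]; [exists x; apply E; auto|].
  exists m; split; [apply E; auto| intros y Hy; apply H2, E; auto].
Qed.

Lemma has_min_In (l : list R) : has_min (fun x => In x l).
Proof.
  intros [x Hx]. revert x Hx. induction l as [|a l IH]; intros x Hx; [destruct Hx|].
  destruct l as [|b l'].
  - exists a; split; [left; auto|]. intros y [<-|[]]; lra.
  - destruct (IH b (or_introl erefl)) as [m [Hm1 Hm2]].
    destruct (Rle_dec a m).
    + exists a; split; [left; auto|]. intros y [<-|Hy]; [lra|]. specialize (Hm2 _ Hy); lra.
    + exists m; split; [right; auto|]. intros y [<-|Hy]; [lra|auto].
Qed.

Lemma has_min_or (P Q : R -> Prop) : has_min P -> has_min Q -> has_min (fun x => P x \/ Q x).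
Proof.
  intros HP HQ Hex.
  destruct (classic (exists x, P x)) as [HPx|nP]; destruct (classic (exists x, Q x)) as [HQx|nQ].
  - destruct (HP HPx) as [m1 [H1 H1']]. destruct (HQ HQx) as [m2 [H2 H2']].
    destruct (Rle_dec m1 m2).
    + exists m1; split; auto. intros x [Hx|Hx]; auto. specialize (H2' _ Hx); lra.
    + exists m2; split; auto. intros x [Hx|Hx]; auto. specialize (H1' _ Hx); lra.
  - destruct (HP HPx) as [m1 [H1 H1']].
    exists m1; split; auto. intros x [Hx|Hx]; auto. exfalso; apply nQ; eauto.
  - destruct (HQ HQx) as [m2 [H2 H2']].
    exists m2; split; auto. intros x [Hx|Hx]; auto. exfalso; apply nP; eauto.
  - exfalso. destruct Hex as [x [Hx|Hx]]; [apply nP| apply nQ]; eauto.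
Qed.

Lemma has_min_exists_In (I : Type) (l : list I) (F : I -> R -> Prop) :
  (forall i, In i l -> has_min (F i)) -> has_min (fun x => exists i, In i l /\ F i x).
Proof.
  induction l as [|i l IH]; intros H.
  - intros [x [j [[] _]]].
  - apply has_min_ext with (fun x => F i x \/ exists j, In j l /\ F j x).
    + intros x; split.
      * intros [Hx|[j [Hj Hx]]]; [exists i| exists j]; split; auto; [left| right]; auto.
      * intros [j [[<-|Hj] Hx]]; [left; auto| right; exists j; auto].
    + apply has_min_or; [apply H; left; auto| apply IH; intros j Hj; apply H; right; auto].
Qed.

Lemma has_min_shift (P : R -> Prop) c : has_min P -> has_min (fun x => exists y, P y /\ x = c + y).
Proof.
  intros H [x [y [Hy ->]]]. destruct H as [m [H1 H2]]; [eauto|].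
  exists (c + m); split; [eauto|]. intros z [w [Hw ->]]. specialize (H2 _ Hw); lra.
Qed.

Lemma has_min_subsingleton (P : R -> Prop) : (forall x y, P x -> P y -> x = y) -> has_min P.
Proof. intros H [x Hx]. exists x; split; auto. intros y Hy; rewrite (H x y Hx Hy); lra. Qed.

(** * Piecewise constant functions and their integrals *)

Definition piecewise_const (A : Type) (f : R -> A) (a b : R) : Prop :=
  exists jumps : list R, forall t1 t2, a < t1 -> t1 <= t2 -> t2 < b ->
    (forall p, In p jumps -> ~ (t1 <= p <= t2)) -> f t1 = f t2.

Lemma piecewise_const_const (A : Type) (c : A) a b : piecewise_const (fun _ => c) a b.
Proof. exists nil; auto. Qed.

Lemma piecewise_const_ext (A : Type) (f g : R -> A) a b :
  piecewise_const f a b -> (forall t, a < t < b -> f t = g t) -> piecewise_const g a b.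
Proof.
  intros [L H] E. exists L. intros t1 t2 ? ? ? Hp. rewrite <- !E; try lra. auto.
Qed.

Lemma piecewise_const_factor (A B : Type) (f : R -> A) (g : R -> B) a b :
  piecewise_const f a b ->
  (forall t1 t2, a < t1 < b -> a < t2 < b -> f t1 = f t2 -> g t1 = g t2) ->
  piecewise_const g a b.
Proof.
  intros [L H] Hg. exists L. intros t1 t2 ? ? ? Hp. apply Hg; try lra. auto.
Qed.

Lemma piecewise_const_pair (A B C : Type) (f : R -> A) (g : R -> B) (h : A -> B -> C) a b :
  piecewise_const f a b -> piecewise_const g a b -> piecewise_const (fun t => h (f t) (g t)) a b.
Proof.
  intros [L1 H1] [L2 H2]. exists (L1 ++ L2). intros t1 t2 ? ? ? Hp.
  rewrite (H1 t1 t2) ?(H2 t1 t2) //; intros p Hin; apply Hp; apply in_or_app; auto.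
Qed.

Lemma piecewise_const_map (I A : Type) (F : I -> R -> A) (l : list I) a b :
  (forall i, In i l -> piecewise_const (F i) a b) ->
  piecewise_const (fun t => List.map (fun i => F i t) l) a b.
Proof.
  induction l as [|i l IH]; intros H; [exact (piecewise_const_const nil a b)|].
  apply (piecewise_const_pair (f := F i) (g := fun t => List.map (fun i => F i t) l) cons).
  - apply H; left; auto.
  - apply IH; intros; apply H; right; auto.
Qed.

Definition Rleb (x y : R) : bool := if Rle_dec x y then true else false.
Definition Reqb (x y : R) : bool := if Req_EM_T x y then true else false.

Lemma Reqb_Rleb x y : Reqb x y = Rleb x y && Rleb y x.
Proof.
  rewrite /Reqb /Rleb. destruct (Req_EM_T x y), (Rle_dec x y), (Rle_dec y x); auto; lra.
Qed.

Lemma Rleb_Rmin_l x y z : Rleb (Rmin x y) z = Rleb x z || Rleb y z.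
Proof. rewrite /Rleb /Rmin. repeat destruct (Rle_dec _ _); auto; lra. Qed.
Lemma Rleb_Rmax_l x y z : Rleb (Rmax x y) z = Rleb x z && Rleb y z.
Proof. rewrite /Rleb /Rmax. repeat destruct (Rle_dec _ _); auto; lra. Qed.
Lemma Rleb_Rmin_r x y z : Rleb z (Rmin x y) = Rleb z x && Rleb z y.
Proof. rewrite /Rleb /Rmin. repeat destruct (Rle_dec _ _); auto; lra. Qed.
Lemma Rleb_Rmax_r x y z : Rleb z (Rmax x y) = Rleb z x || Rleb z y.
Proof. rewrite /Rleb /Rmax. repeat destruct (Rle_dec _ _); auto; lra. Qed.

Lemma piecewise_const_Rleb_affine a1 b1 a2 b2 a b :
  piecewise_const (fun t => Rleb (a1 * t + b1) (a2 * t + b2)) a b.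
Proof.
  destruct (Req_EM_T a1 a2) as [<-|Hne].
  - apply (piecewise_const_factor (piecewise_const_const tt a b)).
    intros t1 t2 _ _ _. rewrite /Rleb. destruct (Rle_dec _ _), (Rle_dec _ _); auto; lra.
  - set p := (b2 - b1) / (a1 - a2).
    have Hp : (a1 - a2) * p = b2 - b1 by rewrite /p; field; lra.
    exists (p :: nil). intros t1 t2 ? ? ? Hjump.
    have Hp12 : p < t1 \/ t2 < p.
    { destruct (Rlt_dec p t1), (Rlt_dec t2 p); auto. exfalso; apply (Hjump p); [left|]; auto; lra. }
    rewrite /Rleb. destruct (Rle_dec (a1 * t1 + b1) _), (Rle_dec (a1 * t2 + b1) _); auto;
      exfalso; destruct (Rlt_dec 0 (a1 - a2)); nra.
Qed.

Lemma piecewise_const_bool2 (f g k : R -> bool) (h : bool -> bool -> bool) a b :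
  piecewise_const f a b -> piecewise_const g a b -> (forall t, k t = h (f t) (g t)) ->
  piecewise_const k a b.
Proof.
  intros Hf Hg Hk. apply (piecewise_const_factor (piecewise_const_pair h Hf Hg)).
  intros t1 t2 _ _ E. rewrite !Hk; auto.
Qed.

(* Min-max combinations of affine functions of [t]: distances to the points of an edge
   have this form, so comparing them is piecewise constant. *)
Inductive minmax_expr :=
  | Affine (a b : R)
  | Emin (u v : minmax_expr)
  | Emax (u v : minmax_expr).

Fixpoint minmax_eval (u : minmax_expr) (t : R) : R :=
  match u with
  | Affine a b => a * t + b
  | Emin u v => Rmin (minmax_eval u t) (minmax_eval v t)
  | Emax u v => Rmax (minmax_eval u t) (minmax_eval v t)
  end.

Lemma piecewise_const_Rleb_minmax (u v : minmax_expr) a b :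
  piecewise_const (fun t => Rleb (minmax_eval u t) (minmax_eval v t)) a b.
Proof.
  revert v; induction u as [a1 b1|u1 IH1 u2 IH2|u1 IH1 u2 IH2]; intros v.
  - induction v as [a2 b2|v1 IHv1 v2 IHv2|v1 IHv1 v2 IHv2].
    + apply piecewise_const_Rleb_affine.
    + apply (piecewise_const_bool2 (h := andb) IHv1 IHv2). intros; apply Rleb_Rmin_r.
    + apply (piecewise_const_bool2 (h := orb) IHv1 IHv2). intros; apply Rleb_Rmax_r.
  - apply (piecewise_const_bool2 (h := orb) (IH1 v) (IH2 v)). intros; apply Rleb_Rmin_l.
  - apply (piecewise_const_bool2 (h := andb) (IH1 v) (IH2 v)). intros; apply Rleb_Rmax_l.
Qed.

Lemma piecewise_const_Reqb_minmax (u v : minmax_expr) a b :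
  piecewise_const (fun t => Reqb (minmax_eval u t) (minmax_eval v t)) a b.
Proof.
  apply (piecewise_const_bool2 (h := andb) (piecewise_const_Rleb_minmax u v a b)
           (piecewise_const_Rleb_minmax v u a b)).
  intros; apply Reqb_Rleb.
Qed.

Lemma Riemann_integrable_const_open (f : R -> R) a b c :
  a <= b -> (forall t, a < t < b -> f t = c) -> Riemann_integrable f a b.
Proof.
  intros Hab Hc eps.
  have Hadapted : adapted_couple f a b (a :: b :: nil) (c :: nil).
  { repeat split.
    - intros i Hi; simpl in Hi. destruct i; [simpl; auto| lia].
    - by rewrite /= Rmin_left.
    - by rewrite /= Rmax_right.
    - intros i Hi; simpl in Hi. destruct i; [|lia]. intros t Ht; apply Hc, Ht. }
  exists (mkStepFun (existT _ (a :: b :: nil) (existT _ (c :: nil) Hadapted))).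
  exists (mkStepFun (StepFun_P4 a b 0)). split.
  - intros t _. rewrite /= /fct_cte Rminus_diag Rabs_R0. lra.
  - rewrite StepFun_P18 Rmult_0_l Rabs_R0. apply cond_pos.
Qed.

Lemma piecewise_const_integrable (f : R -> R) a b :
  a <= b -> piecewise_const f a b -> inhabited (Riemann_integrable f a b).
Proof.
  intros Hab [L H]. revert a b Hab H. induction L as [|p L IH]; intros a b Hab H.
  - destruct (Req_EM_T a b) as [<-|Hne]; [constructor; apply RiemannInt_P7|].
    constructor. apply Riemann_integrable_const_open with (f ((a + b) / 2)); auto.
    intros t Ht. destruct (Rle_dec t ((a + b) / 2)).
    + apply H; try lra. intros _ [].
    + symmetry; apply H; try lra. intros _ [].
  - have Hdrop : forall a' b', a <= a' -> b' <= b -> ~ (a' < p < b') ->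
      forall t1 t2, a' < t1 -> t1 <= t2 -> t2 < b' ->
      (forall q, In q L -> ~ (t1 <= q <= t2)) -> f t1 = f t2.
    { intros a' b' ? ? Hp t1 t2 ? ? ? Hq. apply H; try lra.
      intros q [<-|Hin]; [lra| apply Hq; auto]. }
    destruct (Rlt_dec a p), (Rlt_dec p b).
    + destruct (IH a p) as [I1]; [lra| apply Hdrop; lra|].
      destruct (IH p b) as [I2]; [lra| apply Hdrop; lra|].
      constructor. apply RiemannInt_P24 with p; auto.
    + apply IH; [| apply Hdrop]; lra.
    + apply IH; [| apply Hdrop]; lra.
    + apply IH; [| apply Hdrop]; lra.
Qed.

Lemma integral_eq (f : R -> R) a b (pr : Riemann_integrable f a b) :
  integral f a b = RiemannInt pr.
Proof.
  rewrite /integral. destruct (excluded_middle_informative _) as [h|h].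
  - apply RiemannInt_P5.
  - exfalso; apply h; constructor; exact pr.
Qed.

Lemma RiemannInt_const_le (f : R -> R) a b c (pr : Riemann_integrable f a b) :
  a <= b -> (forall t, a < t < b -> c <= f t) -> c * (b - a) <= RiemannInt pr.
Proof.
  intros Hab H. rewrite <- (RiemannInt_P15 (RiemannInt_P14 a b c)).
  apply RiemannInt_P19; auto.
Qed.

Lemma integral_ge0 (f : R -> R) a b :
  a <= b -> (forall t, a < t < b -> 0 <= f t) -> 0 <= integral f a b.
Proof.
  intros Hab H. rewrite /integral. destruct (excluded_middle_informative _); [|lra].
  rewrite -(Rmult_0_l (b - a)). apply RiemannInt_const_le; auto.
Qed.

Lemma integral_le_const (f : R -> R) a b c : a <= b -> inhabited (Riemann_integrable f a b) ->
  (forall t, a < t < b -> f t <= c) -> integral f a b <= c * (b - a).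
Proof.
  intros Hab [pr] H. rewrite (integral_eq pr) -(RiemannInt_P15 (RiemannInt_P14 a b c)).
  apply RiemannInt_P19; auto.
Qed.

Lemma integral_ge_subinterval (f : R -> R) a b c d : a <= c -> c <= d -> d <= b ->
  inhabited (Riemann_integrable f a b) ->
  (forall t, a < t < b -> 0 <= f t) -> (forall t, c < t < d -> 1 <= f t) ->
  d - c <= integral f a b.
Proof.
  intros Hac Hcd Hdb [pr] H0 H1. rewrite (integral_eq pr).
  have Hcb : a <= c <= b by lra.
  have Hdb' : c <= d <= b by lra.
  pose (Iac := RiemannInt_P22 pr Hcb). pose (Icb := RiemannInt_P23 pr Hcb).
  pose (Icd := RiemannInt_P22 Icb Hdb'). pose (Idb := RiemannInt_P23 Icb Hdb').
  rewrite -(RiemannInt_P26 Iac Icb pr) -(RiemannInt_P26 Icd Idb Icb).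
  have := RiemannInt_const_le Iac Hac (fun t Ht => H0 t ltac:(lra)).
  have := RiemannInt_const_le Idb Hdb (fun t Ht => H0 t ltac:(lra)).
  have := RiemannInt_const_le Icd Hcd H1.
  lra.
Qed.

Lemma integral_plus (f g : R -> R) a b :
  inhabited (Riemann_integrable f a b) -> inhabited (Riemann_integrable g a b) ->
  inhabited (Riemann_integrable (fun t => f t + g t) a b) /\
  integral (fun t => f t + g t) a b = integral f a b + integral g a b.
Proof.
  intros [pf] [pg].
  pose (pfg := RiemannInt_P10 1 pf pg).
  have pfg' : Riemann_integrable (fun t => f t + g t) a b.
  { apply Riemann_integrable_ext with (fun t => f t + 1 * g t); auto. intros; ring. }
  split; [constructor; auto|].
  rewrite (integral_eq pfg') (integral_eq pf) (integral_eq pg).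
  rewrite -(Rmult_1_l (RiemannInt pg)) -(RiemannInt_P13 pf pg pfg).
  destruct (Rle_dec a b).
  - apply RiemannInt_P18; auto. intros; ring.
  - rewrite (RiemannInt_P8 pfg' (RiemannInt_P1 pfg')) (RiemannInt_P8 pfg (RiemannInt_P1 pfg)).
    f_equal. apply RiemannInt_P18; [lra|]. intros; ring.
Qed.

Lemma integral_sumR (I : Type) (F : I -> R -> R) (l : list I) a b :
  (forall i, In i l -> inhabited (Riemann_integrable (F i) a b)) ->
  inhabited (Riemann_integrable (fun t => sumR (fun i => F i t) l) a b) /\
  integral (fun t => sumR (fun i => F i t) l) a b = sumR (fun i => integral (F i) a b) l.
Proof.
  induction l as [|i l IH]; intros H.
  - have pr0 : Riemann_integrable (fun _ => 0) a b by apply (RiemannInt_P14 a b 0).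
    split; [constructor; exact pr0|].
    rewrite (integral_eq pr0) (RiemannInt_P15 pr0) sumR_nil. ring.
  - destruct IH as [Il El]; [intros; apply H; right; auto|].
    destruct (integral_plus (H i (or_introl erefl)) Il) as [Ii Ei].
    split; auto. rewrite sumR_cons -El -Ei. reflexivity.
Qed.

(** * Counting locations *)

Section CountAt.
Variables (I A : Type) (dec : forall u v : A, {u = v} + {u <> v}) (x : I -> A).

Definition same_loc (i j : I) : bool := if dec (x j) (x i) then true else false.

Lemma same_loc_refl i : same_loc i i.
Proof. rewrite /same_loc. by destruct (dec (x i) (x i)). Qed.

Definition count_at (l : list I) (i : I) : nat := length (List.filter (same_loc i) l).

Lemma count_at_pos l i : In i l -> (0 < count_at l i)%coq_nat.
Proof.
  intros H. have Hi : In i (List.filter (same_loc i) l).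
  { apply filter_In; split; [|apply same_loc_refl]; auto. }
  rewrite /count_at. destruct (List.filter _ l); [destruct Hi| simpl; lia].
Qed.

Lemma count_at_filter_le (Q : I -> bool) l i :
  (count_at (List.filter Q l) i <= count_at l i)%coq_nat.
Proof.
  rewrite /count_at. induction l as [|a l IH]; simpl; auto.
  destruct (Q a); simpl; destruct (same_loc i a); simpl; lia.
Qed.

Lemma count_at_same_loc l i j : same_loc i j = true -> count_at l j = count_at l i.
Proof.
  rewrite /same_loc /count_at. destruct (dec (x j) (x i)) as [E|]; [|discriminate].
  intros _. by rewrite /same_loc E.
Qed.

Lemma count_at_other_locs l i j : same_loc i j = false ->
  count_at (List.filter (fun k => negb (same_loc i k)) l) j = count_at l j.
Proof.
  rewrite /count_at /same_loc. intros Hj. f_equal.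
  induction l as [|k l IH]; simpl; auto.
  destruct (dec (x j) (x i)) as [|Hne]; [discriminate|].
  destruct (dec (x k) (x j)) as [E|], (dec (x k) (x i)) as [E'|]; simpl; rewrite ?IH; auto.
  - exfalso; apply Hne; congruence.
  - by destruct (dec (x k) (x j)).
  - by destruct (dec (x k) (x j)).
Qed.

Lemma nodup_map_other_locs l i : In i l ->
  length (nodup dec (List.map x l)) =
  S (length (nodup dec (List.map x (List.filter (fun k => negb (same_loc i k)) l)))).
Proof.
  intros Hi. set l' := List.filter _ l.
  set U := nodup _ (List.map x l). set V := nodup _ (List.map x l').
  have HU : NoDup U by apply NoDup_nodup.
  have HV : NoDup (x i :: V).
  { constructor; [|apply NoDup_nodup]. rewrite /V nodup_In in_map_iff.
    intros [j [Ej Hj]]. apply filter_In in Hj. destruct Hj as [_ Hj].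
    move: Hj; rewrite /same_loc. by destruct (dec (x j) (x i)). }
  have UV : incl U (x i :: V).
  { intros p Hp. rewrite /U nodup_In in_map_iff in Hp. destruct Hp as [j [<- Hj]].
    destruct (dec (x j) (x i)) as [E|E]; [left; auto|right].
    rewrite /V nodup_In. apply in_map, filter_In. split; auto.
    rewrite /same_loc. by destruct (dec (x j) (x i)). }
  have VU : incl (x i :: V) U.
  { intros p [<-|Hp]; rewrite /U nodup_In; [apply in_map; auto|].
    rewrite /V nodup_In in_map_iff in Hp. destruct Hp as [j [<- Hj]].
    apply in_map. apply filter_In in Hj. tauto. }
  have := NoDup_incl_length HU UV. have := NoDup_incl_length HV VU. simpl. lia.
Qed.

(* Each location occupied by the indices of [l] receives total weight one. *)
Lemma sumR_inv_count_at l :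
  sumR (fun i => / INR (count_at l i)) l = INR (length (nodup dec (List.map x l))).
Proof.
  remember (length l) as N eqn:HN. revert l HN.
  induction N as [N IH] using lt_wf_ind. intros l HN.
  destruct l as [|i rest]; [reflexivity|]. set l := i :: rest.
  have Hi : In i l by left.
  set l' := List.filter (fun k => negb (same_loc i k)) l.
  rewrite (sumR_split _ (same_loc i)).
  have Hhere : sumR (fun j => / INR (count_at l j)) (List.filter (same_loc i) l) = 1.
  { rewrite (sumR_ext (h := fun _ => / INR (count_at l i))).
    - rewrite sumR_const. have := lt_0_INR _ (count_at_pos Hi). rewrite /count_at.
      intros. field. lra.
    - intros j Hj. apply filter_In in Hj. by rewrite (count_at_same_loc _ (proj2 Hj)). }
  have Helse : sumR (fun j => / INR (count_at l j)) l' = sumR (fun j => / INR (count_at l' j)) l'.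
  { apply sumR_ext. intros j Hj. apply filter_In in Hj.
    rewrite count_at_other_locs //. apply negbTE, (proj2 Hj). }
  rewrite Hhere Helse (IH (length l')) //.
  - rewrite (nodup_map_other_locs Hi) S_INR -/l'. ring.
  - rewrite HN /l' /l /= same_loc_refl /=.
    have := filter_length_le (fun k => negb (same_loc i k)) rest. lia.
Qed.

End CountAt.

(** * Walks and shortest-path distance *)

Section Network.
Variable G : network.
Hypothesis len_pos : forall e : edge G, 0 < len e.
Hypothesis no_loop : forall e : edge G, src e <> tgt e.
Hypothesis conn : connected_graph G.

Lemma walk_len_nonneg (u w : vert G) L : walk_len u w L -> 0 <= L.
Proof. induction 1; [lra| |]; have := len_pos e; lra. Qed.

Lemma walk_len_cat (u v w : vert G) L1 L2 :
  walk_len u v L1 -> walk_len v w L2 -> walk_len u w (L1 + L2).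
Proof.
  induction 1 as [|e v' L1 _ IH|e v' L1 _ IH]; intros H2.
  - by rewrite Rplus_0_l.
  - rewrite Rplus_assoc. constructor; auto.
  - rewrite Rplus_assoc. constructor; auto.
Qed.

Lemma walk_len_src_tgt (e : edge G) : walk_len (src e) (tgt e) (len e).
Proof. rewrite -(Rplus_0_r (len e)). do 2 constructor. Qed.

Lemma walk_len_tgt_src (e : edge G) : walk_len (tgt e) (src e) (len e).
Proof. rewrite -(Rplus_0_r (len e)). do 2 constructor. Qed.

Lemma walk_len_rev (u w : vert G) L : walk_len u w L -> walk_len w u L.
Proof.
  induction 1; [constructor| |]; rewrite Rplus_comm; eapply walk_len_cat; eauto.
  - apply walk_len_tgt_src.
  - apply walk_len_src_tgt.
Qed.

(* The seed [1] keeps [min_len] positive when there are no edges. *)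
Definition min_len : R := fold_right Rmin 1 (List.map (@len G) (enum (edge G))).

Lemma min_len_pos : 0 < min_len.
Proof.
  rewrite /min_len. induction (enum (edge G)) as [|a l IH]; simpl; [lra|].
  apply Rmin_glb_lt; auto.
Qed.

Lemma In_enum (e : edge G) : In e (enum (edge G)).
Proof.
  have : e \in enum (edge G) by rewrite mem_enum.
  elim: (enum (edge G)) => [|a s IH] //=. rewrite in_cons => /orP [/eqP ->|H]; auto.
Qed.

Lemma min_len_le (e : edge G) : min_len <= len e.
Proof. apply fold_Rmin_le, In_enum. Qed.

Fixpoint walk_lens (k : nat) (a b : vert G) : list R :=
  match k with
  | O => if a == b then 0 :: nil else nil
  | S k' => flat_map (fun e =>
       (if src e == a then List.map (Rplus (len e)) (walk_lens k' (tgt e) b) else nil) ++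
       (if tgt e == a then List.map (Rplus (len e)) (walk_lens k' (src e) b) else nil))
       (enum (edge G))
  end.

Lemma walk_lens_walk_len k (a b : vert G) L : In L (walk_lens k a b) -> walk_len a b L.
Proof.
  revert a L; induction k as [|k IH]; intros a L; simpl.
  - case: eqP => [->|_] /=; [intros [<-|[]]; constructor| tauto].
  - rewrite in_flat_map. intros [e [_ H]]. apply in_app_or in H.
    destruct H as [H|H]; move: H; (case: eqP => [<-|_]; [|simpl; tauto]);
      rewrite in_map_iff; intros [L' [<- H]]; constructor; auto.
Qed.

Lemma walk_len_walk_lens (a b : vert G) L : walk_len a b L -> exists k, In L (walk_lens k a b).
Proof.
  induction 1 as [u|e w L _ [k Hk]|e w L _ [k Hk]].
  - exists O. by rewrite /= eqxx; left.
  - exists (S k). rewrite /= in_flat_map. exists e; split; [apply In_enum|].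
    apply in_or_app; left. rewrite eqxx. apply in_map; auto.
  - exists (S k). rewrite /= in_flat_map. exists e; split; [apply In_enum|].
    apply in_or_app; right. rewrite eqxx. apply in_map; auto.
Qed.

Lemma walk_lens_ge k (a b : vert G) L : In L (walk_lens k a b) -> INR k * min_len <= L.
Proof.
  revert a L; induction k as [|k IH]; intros a L.
  - rewrite /=. case: eqP => _ /=; [intros [<-|[]]; lra| tauto].
  - rewrite S_INR /= in_flat_map. intros [e [_ H]]. have := min_len_le e.
    apply in_app_or in H.
    destruct H as [H|H]; move: H; (case: eqP => _; [|simpl; tauto]);
      rewrite in_map_iff; intros [L' [<- H]]; have := IH _ _ H; lra.
Qed.

(* A walk has at least [L / min_len] edges, so only finitely many walk lengths lie below [L]. *)
Lemma walk_len_has_min (a b : vert G) : has_min (walk_len a b).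
Proof.
  intros [L0 HL0].
  destruct (INR_archimed min_len L0 min_len_pos) as [K HK].
  set short := flat_map (fun k => walk_lens k a b) (List.seq 0 K).
  have Hshort : forall L, walk_len a b L -> L <= L0 -> In L short.
  { intros L HL HLL. destruct (walk_len_walk_lens HL) as [k Hk].
    apply in_flat_map. exists k; split; auto. apply in_seq.
    have Hk' := walk_lens_ge Hk.
    have : INR k < INR K by apply Rmult_lt_reg_r with min_len; [apply min_len_pos| lra].
    move/INR_lt. lia. }
  destruct (has_min_In (ex_intro _ L0 (Hshort L0 HL0 (Rle_refl _)))) as [m [Hm1 Hm2]].
  exists m; split.
  - apply in_flat_map in Hm1. destruct Hm1 as [k [_ Hk]]. eapply walk_lens_walk_len; eauto.
  - intros L HL. destruct (Rle_dec L L0).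
    + apply Hm2, Hshort; auto.
    + apply Rle_trans with L0; [apply Hm2, Hshort; auto; lra| lra].
Qed.

Definition endpoints (p : point G) : list (vert G * R) :=
  match p with
  | Vtx v => (v, 0) :: nil
  | Int e t => (src e, t) :: (tgt e, len e - t) :: nil
  end.

Lemma end_dist_endpoints (p : point G) a r : end_dist p a r <-> In (a, r) (endpoints p).
Proof.
  destruct p as [v|e t]; simpl; split.
  - intros [-> ->]; auto.
  - intros [H|[]]; inversion H; auto.
  - intros [[-> ->]|[-> ->]]; auto.
  - intros [H|[H|[]]]; inversion H; auto.
Qed.

Definition via_walk (p q : point G) (L : R) : Prop :=
  exists a b r1 L0 r2,
    end_dist p a r1 /\ walk_len a b L0 /\ end_dist q b r2 /\ L = r1 + L0 + r2.

Lemma path_len_has_min (p q : point G) : has_min (path_len p q).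
Proof.
  apply has_min_or.
  - apply has_min_subsingleton.
    intros ? ? [e [s [t [-> [-> ->]]]]] [e' [s' [t' [H1 [H2 ->]]]]].
    inversion H1; inversion H2; subst; auto.
  - apply (has_min_ext (P := fun L => exists ab, In ab (list_prod (endpoints p) (endpoints q)) /\
             exists L0, walk_len ab.1.1 ab.2.1 L0 /\ L = (ab.1.2 + ab.2.2) + L0)).
    + intros L; split.
      * intros [[[a r1] [b r2]] [Hin [L0 [HL0 ->]]]]. apply in_prod_iff in Hin.
        rewrite -!end_dist_endpoints in Hin. exists a, b, r1, L0, r2.
        repeat split; try tauto. rewrite /=. ring.
      * intros [a [b [r1 [L0 [r2 [H1 [H2 [H3 ->]]]]]]]].
        exists ((a, r1), (b, r2)); split.
        -- apply in_prod_iff; split; apply end_dist_endpoints; auto.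
        -- exists L0; split; auto. rewrite /=. ring.
    + apply has_min_exists_In. intros [[a r1] [b r2]] _. apply has_min_shift, walk_len_has_min.
Qed.

Lemma path_len_exists (p q : point G) : exists L, path_len p q L.
Proof.
  have [a [r1 H1]] : exists a r, end_dist p a r.
  { destruct p as [v|e t]; [exists v, 0| exists (src e), t]; simpl; auto. }
  have [b [r2 H2]] : exists b r, end_dist q b r.
  { destruct q as [v|e t]; [exists v, 0| exists (src e), t]; simpl; auto. }
  destruct (conn a b) as [L0 HL0]. exists (r1 + L0 + r2). right.
  exists a, b, r1, L0, r2; auto.
Qed.

Lemma dist_spec (p q : point G) :
  path_len p q (dist p q) /\ forall L, path_len p q L -> dist p q <= L.
Proof.
  rewrite /dist. apply epsilon_spec. apply (path_len_has_min (path_len_exists p q)).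
Qed.

Lemma path_len_dist (p q : point G) : path_len p q (dist p q).
Proof. apply dist_spec. Qed.

Lemma dist_le (p q : point G) L : path_len p q L -> dist p q <= L.
Proof. apply dist_spec. Qed.

Lemma end_dist_nonneg (p : point G) a r : valid_point p -> end_dist p a r -> 0 <= r.
Proof. destruct p as [v|e t]; simpl; [intros _ [_ ->]| intros H [[_ ->]|[_ ->]]]; lra. Qed.

Lemma path_len_nonneg (p q : point G) L :
  valid_point p -> valid_point q -> path_len p q L -> 0 <= L.
Proof.
  intros Hp Hq [[e [s [t [_ [_ ->]]]]]|[a [b [r1 [L0 [r2 [H1 [H2 [H3 ->]]]]]]]]].
  - apply Rabs_pos.
  - have := end_dist_nonneg Hp H1. have := end_dist_nonneg Hq H3. have := walk_len_nonneg H2.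
    lra.
Qed.

Lemma via_walk_sym (p q : point G) L : via_walk p q L -> via_walk q p L.
Proof.
  intros [a [b [r1 [L0 [r2 [H1 [H2 [H3 ->]]]]]]]].
  exists b, a, r2, L0, r1; split; [|split; [|split]]; auto; [apply walk_len_rev; auto| ring].
Qed.

Lemma path_len_sym (p q : point G) L : path_len p q L -> path_len q p L.
Proof.
  intros [[e [s [t [-> [-> ->]]]]]|H].
  - left; exists e, t, s; repeat split; apply Rabs_minus_sym.
  - right; apply via_walk_sym, H.
Qed.

Lemma end_dist_walk (z : point G) a r b r' :
  valid_point z -> end_dist z a r -> end_dist z b r' -> exists L, walk_len a b L /\ L <= r + r'.
Proof.
  destruct z as [v|e t]; simpl.
  - intros _ [-> ->] [-> ->]. exists 0; split; [constructor| lra].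
  - intros Ht [[-> ->]|[-> ->]] [[-> ->]|[-> ->]].
    + exists 0; split; [constructor| lra].
    + exists (len e); split; [apply walk_len_src_tgt| lra].
    + exists (len e); split; [apply walk_len_tgt_src| lra].
    + exists 0; split; [constructor| lra].
Qed.

Lemma via_walk_triangle (p z q : point G) L1 L2 :
  valid_point z -> via_walk p z L1 -> via_walk z q L2 -> exists L, via_walk p q L /\ L <= L1 + L2.
Proof.
  intros Hz [a [b [r1 [L0 [r2 [H1 [H2 [H3 ->]]]]]]]]
    [a' [b' [r1' [L0' [r2' [H1' [H2' [H3' ->]]]]]]]].
  destruct (end_dist_walk Hz H3 H1') as [W [HW HWle]].
  exists (r1 + (L0 + W + L0') + r2'); split; [|lra].
  exists a, b', r1, (L0 + W + L0'), r2'; repeat split; auto.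
  apply walk_len_cat with a'; [apply walk_len_cat with b|]; auto.
Qed.

Lemma path_len_seg_walk (e : edge G) s t q L :
  via_walk (Int e t) q L -> exists L', path_len (Int e s) q L' /\ L' <= Rabs (s - t) + L.
Proof.
  intros [a [b [r1 [L0 [r2 [[[-> ->]|[-> ->]] [H2 [H3 ->]]]]]]]].
  - exists (s + L0 + r2); split.
    + right; exists (src e), b, s, L0, r2; repeat split; auto. by left.
    + have := Rle_abs (s - t). lra.
  - exists (len e - s + L0 + r2); split.
    + right; exists (tgt e), b, (len e - s), L0, r2; repeat split; auto. by right.
    + have := Rle_abs (t - s). rewrite Rabs_minus_sym. lra.
Qed.

Lemma path_len_triangle (p z q : point G) L1 L2 :
  valid_point z -> path_len p z L1 -> path_len z q L2 -> exists L, path_len p q L /\ L <= L1 + L2.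
Proof.
  intros Hz [[e [s [t [-> [-> ->]]]]]|H1] H2.
  - destruct H2 as [[e' [s' [t' [E [-> ->]]]]]|H2]; [|apply path_len_seg_walk, H2].
    injection E as <- <-. exists (Rabs (s - t')); split; [left; exists e, s, t'; auto|].
    replace (s - t') with ((s - t) + (t - t')) by ring. apply Rabs_triang.
  - destruct H2 as [[e [s [t [-> [-> ->]]]]]|H2].
    + destruct (path_len_seg_walk t (via_walk_sym H1)) as [L [HL HLe]].
      exists L; split; [apply path_len_sym, HL| rewrite Rabs_minus_sym; lra].
    + destruct (via_walk_triangle Hz H1 H2) as [L [HL HLe]]. exists L; split; [right|]; auto.
Qed.

Lemma dist_nonneg (p q : point G) : valid_point p -> valid_point q -> 0 <= dist p q.
Proof. intros Hp Hq. exact (path_len_nonneg Hp Hq (path_len_dist p q)). Qed.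

Lemma dist_sym (p q : point G) : dist p q = dist q p.
Proof. apply Rle_antisym; apply dist_le, path_len_sym, path_len_dist. Qed.

Lemma dist_triangle (p z q : point G) : valid_point z -> dist p q <= dist p z + dist z q.
Proof.
  intros Hz. destruct (path_len_triangle Hz (path_len_dist p z) (path_len_dist z q)) as [L [H1 H2]].
  eapply Rle_trans; [apply dist_le; eauto| auto].
Qed.

Lemma dist_Int_src (e : edge G) t : dist (Int e t) (Vtx (src e)) <= t.
Proof.
  apply dist_le. right; exists (src e), (src e), t, 0, 0.
  repeat split; [by left| constructor| ring].
Qed.

Lemma dist_Int_tgt (e : edge G) t : dist (Int e t) (Vtx (tgt e)) <= len e - t.
Proof.
  apply dist_le. right; exists (tgt e), (tgt e), (len e - t), 0, 0.
  repeat split; [by right| constructor| ring].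
Qed.

Lemma dist_Int_Int (e : edge G) s t : dist (Int e t) (Int e s) <= Rabs (t - s).
Proof. apply dist_le. left; exists e, t, s; auto. Qed.

Lemma dist_src_tgt (e : edge G) : dist (Vtx (src e)) (Vtx (tgt e)) <= len e.
Proof.
  apply dist_le. right; exists (src e), (tgt e), 0, (len e), 0.
  repeat split; [apply walk_len_src_tgt| ring].
Qed.

(* A shortest path to a point of [e] enters [e] through one of its endpoints, unless it
   runs inside [e]. *)
Definition dist_expr_via_ends (q : point G) (e : edge G) : minmax_expr :=
  Emin (Affine 1 (dist q (Vtx (src e)))) (Affine (-1) (dist q (Vtx (tgt e)) + len e)).

Definition dist_expr (q : point G) (e : edge G) : minmax_expr :=
  match q with
  | Int e' s =>
      if e' == e then Emin (dist_expr_via_ends q e) (Emax (Affine (-1) s) (Affine 1 (-s)))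
      else dist_expr_via_ends q e
  | Vtx _ => dist_expr_via_ends q e
  end.

Lemma Rmax_affine_abs s t : Rmax (-1 * t + s) (1 * t + - s) = Rabs (s - t).
Proof. rewrite /Rmax /Rabs. destruct (Rle_dec _ _), (Rcase_abs _); lra. Qed.

Lemma dist_Int_le_via_ends (q : point G) (e : edge G) t :
  dist q (Int e t) <= minmax_eval (dist_expr_via_ends q e) t.
Proof.
  apply Rmin_glb.
  - eapply Rle_trans; [exact (dist_triangle q (Int e t) (z := Vtx (src e)) I)|].
    rewrite (dist_sym (Vtx (src e))). have := dist_Int_src e t. lra.
  - eapply Rle_trans; [exact (dist_triangle q (Int e t) (z := Vtx (tgt e)) I)|].
    rewrite (dist_sym (Vtx (tgt e))). have := dist_Int_tgt e t. lra.
Qed.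

Lemma via_walk_Int_ge (q : point G) (e : edge G) t L :
  via_walk q (Int e t) L -> minmax_eval (dist_expr_via_ends q e) t <= L.
Proof.
  intros [a [b [r1 [L0 [r2 [H1 [H2 [[[-> ->]|[-> ->]] ->]]]]]]]].
  - have : dist q (Vtx (src e)) <= r1 + L0.
    { apply dist_le. right; exists a, (src e), r1, L0, 0; repeat split; auto; ring. }
    rewrite /=. have := Rmin_l (1 * t + dist q (Vtx (src e)))
                           (-1 * t + (dist q (Vtx (tgt e)) + len e)). lra.
  - have : dist q (Vtx (tgt e)) <= r1 + L0.
    { apply dist_le. right; exists a, (tgt e), r1, L0, 0; repeat split; auto; ring. }
    rewrite /=. have := Rmin_r (1 * t + dist q (Vtx (src e)))
                           (-1 * t + (dist q (Vtx (tgt e)) + len e)). lra.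
Qed.

Lemma dist_minmax (q : point G) (e : edge G) t :
  dist q (Int e t) = minmax_eval (dist_expr q e) t.
Proof.
  apply Rle_antisym.
  - destruct q as [v|e' s]; [apply dist_Int_le_via_ends|]. rewrite /dist_expr.
    case: eqP => [<-|_]; [|apply dist_Int_le_via_ends].
    apply Rmin_glb; [apply dist_Int_le_via_ends|].
    rewrite /= Rmax_affine_abs. apply dist_le. left; exists e', s, t; auto.
  - destruct (path_len_dist q (Int e t)) as [[e' [s [t' [-> [E ->]]]]]|H].
    + injection E as -> ->. rewrite /= eqxx /= Rmax_affine_abs. apply Rmin_r.
    + have := via_walk_Int_ge H. destruct q as [v|e' s]; auto. rewrite /dist_expr.
      case: (e' == e); auto. have := Rmin_l (minmax_eval (dist_expr_via_ends (Int e' s) e) t)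
        (minmax_eval (Emax (Affine (-1) s) (Affine 1 (- s))) t). rewrite /=. lra.
Qed.

(** * Shares and payoffs *)

Lemma mind_le_dist n (x : profile G) y j : (j < n)%coq_nat -> mind n x y <= dist (x j) y.
Proof. intros Hj. apply (fold_Rmin_le (fun i => dist (x i) y)), in_seq. lia. Qed.

Definition mind_expr n (x : profile G) (e : edge G) : minmax_expr :=
  fold_right Emin (dist_expr (x 0%nat) e) (List.map (fun j => dist_expr (x j) e) (List.seq 0 n)).

Lemma mind_minmax n (x : profile G) e t : mind n x (Int e t) = minmax_eval (mind_expr n x e) t.
Proof.
  rewrite /mind /mind_expr. induction (List.seq 0 n) as [|j l IH]; rewrite /= dist_minmax //.
  by rewrite IH.
Qed.

Lemma share_nonneg n (x : profile G) i y : 0 <= share n x i y.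
Proof.
  rewrite /share. destruct (Req_EM_T _ _); simpl; [|lra].
  apply Rinv_nonneg, Rmult_le_pos; apply pos_INR.
Qed.

Lemma sumR_share_le1 n (x : profile G) y : sumR (fun i => share n x i y) (List.seq 0 n) <= 1.
Proof.
  set cl := closest_players n x y.
  set K := INR (n_closest_locs n x y).
  set cnt := count_at (@point_eq_dec G) x.
  have -> : sumR (fun i => share n x i y) (List.seq 0 n) =
            sumR (fun i => / (K * INR (cnt (List.seq 0 n) i))) cl.
  { rewrite /cl /closest_players -sumR_filter. apply sumR_ext. intros j _.
    rewrite /share. by destruct (Req_EM_T _ _). }
  destruct cl as [|i0 cl'] eqn:Ecl; [rewrite sumR_nil; lra|]. rewrite -Ecl.
  have HK : 0 < K.
  { apply lt_0_INR. rewrite /n_closest_locs -/cl.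
    have : In (x i0) (nodup (@point_eq_dec G) (List.map x cl)).
    { rewrite nodup_In. apply in_map. rewrite Ecl; left; auto. }
    destruct (nodup _ _); [intros []| simpl; lia]. }
  apply Rle_trans with (sumR (fun i => / K * / INR (cnt cl i)) cl).
  - apply sumR_le. intros j Hj. rewrite Rinv_mult.
    apply Rmult_le_compat_l; [left; apply Rinv_0_lt_compat; auto|].
    apply Rinv_le_contravar; [apply lt_0_INR, count_at_pos; auto| apply le_INR].
    apply count_at_filter_le.
  - rewrite sumR_scale sumR_inv_count_at /K /n_closest_locs -/cl Rinv_l; [lra|].
    rewrite /K /n_closest_locs -/cl in HK. lra.
Qed.

Definition closest_pattern n (x : profile G) (y : point G) : list bool :=
  List.map (fun j => Reqb (dist (x j) y) (mind n x y)) (List.seq 0 n).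

Lemma map_eq_In (A B : Type) (f g : A -> B) l a :
  List.map f l = List.map g l -> In a l -> f a = g a.
Proof.
  induction l as [|b l IH]; [intros _ []|]. intros E [<-|H]; injection E; auto.
Qed.

Lemma share_closest_pattern n (x : profile G) i (y1 y2 : point G) :
  (i < n)%coq_nat -> closest_pattern n x y1 = closest_pattern n x y2 ->
  share n x i y1 = share n x i y2.
Proof.
  intros Hi E.
  have Hcl : closest_players n x y1 = closest_players n x y2.
  { apply filter_ext_in. intros j Hj. exact (map_eq_In E Hj). }
  have Ei := map_eq_In E (proj2 (in_seq n 0 i) (conj (Nat.le_0_l i) Hi)).
  rewrite /Reqb in Ei. rewrite /share /n_closest_locs Hcl.
  destruct (Req_EM_T (dist (x i) y1) _), (Req_EM_T (dist (x i) y2) _); auto; discriminate.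
Qed.

Lemma share_piecewise_const n (x : profile G) i e :
  (i < n)%coq_nat -> piecewise_const (fun t => share n x i (Int e t)) 0 (len e).
Proof.
  intros Hi.
  have Hpattern : piecewise_const (fun t => closest_pattern n x (Int e t)) 0 (len e).
  { apply (piecewise_const_ext (f := fun t => List.map (fun j =>
        Reqb (minmax_eval (dist_expr (x j) e) t) (minmax_eval (mind_expr n x e) t))
        (List.seq 0 n))).
    - apply (piecewise_const_map (F := fun j t => Reqb (minmax_eval (dist_expr (x j) e) t)
                                              (minmax_eval (mind_expr n x e) t))).
      intros j _. apply piecewise_const_Reqb_minmax.
    - intros t _. apply map_ext. intros j. by rewrite dist_minmax mind_minmax. }
  apply (piecewise_const_factor Hpattern). intros t1 t2 _ _. apply share_closest_pattern, Hi.
Qed.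

Lemma share_integrable n (x : profile G) i e :
  (i < n)%coq_nat -> inhabited (Riemann_integrable (fun t => share n x i (Int e t)) 0 (len e)).
Proof.
  intros Hi. apply piecewise_const_integrable; [left; apply len_pos|].
  apply share_piecewise_const, Hi.
Qed.

Lemma sumR_payoff_le n (x : profile G) :
  sumR (fun i => payoff n x i) (List.seq 0 n) <= total_length G.
Proof.
  change (sumR (fun i => sumR (fun e => integral (fun t => share n x i (Int e t)) 0 (len e))
           (enum (edge G))) (List.seq 0 n) <= sumR (@len G) (enum (edge G))).
  rewrite sumR_swap. apply sumR_le. intros e _.
  destruct (integral_sumR (F := fun i t => share n x i (Int e t)) (l := List.seq 0 n)
              (a := 0) (b := len e)) as [Hint <-].
  { intros j Hj. apply share_integrable. apply in_seq in Hj. lia. }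
  rewrite -{2}(Rmult_1_l (len e)) -{2}(Rminus_0_r (len e)).
  apply integral_le_const; auto; [left; apply len_pos|]. intros t _. apply sumR_share_le1.
Qed.

Lemma exists_payoff_le_average n (x : profile G) :
  (0 < n)%coq_nat -> exists i, (i < n)%coq_nat /\ payoff n x i <= total_length G / INR n.
Proof.
  intros Hn. apply NNPP. intros Hnone.
  have Hlt : sumR (fun _ => total_length G / INR n) (List.seq 0 n) <
             sumR (fun i => payoff n x i) (List.seq 0 n).
  { apply sumR_lt.
    - destruct n; [lia| discriminate].
    - intros j Hj. apply in_seq in Hj. apply Rnot_le_lt. intros Hle. apply Hnone.
      exists j; split; auto; lia. }
  rewrite sumR_const length_seq in Hlt.
  have := sumR_payoff_le n x.
  have : INR n * (total_length G / INR n) = total_length G by field; apply not_0_INR; lia.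
  lra.
Qed.

(** * Mass of a ball *)

Section BallMass.
Variables (y : point G) (r : R) (h : edge G -> R -> R).
Hypothesis y_valid : valid_point y.
Hypothesis h_integrable : forall e, inhabited (Riemann_integrable (h e) 0 (len e)).
Hypothesis h_nonneg : forall e t, 0 < t < len e -> 0 <= h e t.
Hypothesis h_ball : forall e t, 0 < t < len e -> dist (Int e t) y < r -> 1 <= h e t.

Definition mass (e : edge G) : R := integral (h e) 0 (len e).

Lemma mass_ge0 e : 0 <= mass e.
Proof. apply integral_ge0; [left; apply len_pos| apply h_nonneg]. Qed.

Lemma mass_ge_subinterval e c d : 0 <= c -> c <= d -> d <= len e ->
  (forall t, c < t < d -> dist (Int e t) y < r) -> d - c <= mass e.
Proof.
  intros Hc Hcd Hd Hball. apply integral_ge_subinterval; auto.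
  intros t Ht. apply h_ball; [lra| apply Hball; auto].
Qed.

Lemma sumR_mass_le (C : list (edge G)) : NoDup C -> sumR mass C <= sumR mass (enum (edge G)).
Proof. intros HC. apply sumR_incl_le; auto; [apply mass_ge0| intros e _; apply In_enum]. Qed.

Lemma mass_ge_toward_end e s a l : y = Int e s -> end_dist y a l -> Rmin r l <= mass e.
Proof.
  intros Ey Ha. have Hs := y_valid. rewrite Ey in Hs Ha. simpl in Hs.
  destruct (Rle_dec r 0). { have := mass_ge0 e. have := Rmin_l r l. lra. }
  have Hmin : 0 < Rmin r l <= l.
  { split; [apply Rmin_glb_lt|apply Rmin_r]; destruct Ha as [[_ ->]|[_ ->]]; lra. }
  have Hr := Rmin_l r l.
  destruct Ha as [[_ ->]|[_ ->]].
  - replace (Rmin r s) with (s - (s - Rmin r s)) by ring.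
    apply mass_ge_subinterval; try lra. intros t Ht. rewrite Ey.
    eapply Rle_lt_trans; [apply dist_Int_Int|]. rewrite Rabs_left; lra.
  - replace (Rmin r (len e - s)) with ((s + Rmin r (len e - s)) - s) by ring.
    apply mass_ge_subinterval; try lra. intros t Ht. rewrite Ey.
    eapply Rle_lt_trans; [apply dist_Int_Int|]. rewrite Rabs_right; lra.
Qed.

Lemma mass_ge_near_end e a w : a = src e \/ a = tgt e -> 0 <= w <= len e ->
  Rmin w (Rmax 0 (r - dist (Vtx a) y)) <= mass e.
Proof.
  intros Ha Hw. set W := Rmin w _.
  have HW : 0 <= W <= w /\ (0 < W -> W <= r - dist (Vtx a) y).
  { rewrite /W /Rmin /Rmax. repeat destruct (Rle_dec _ _); lra. }
  destruct Ha as [->| ->].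
  - rewrite -(Rminus_0_r W). apply mass_ge_subinterval; try lra. intros t Ht.
    eapply Rle_lt_trans; [exact (dist_triangle (Int e t) y (z := Vtx (src e)) I)|].
    have := dist_Int_src e t. lra.
  - replace W with (len e - (len e - W)) by ring. apply mass_ge_subinterval; try lra. intros t Ht.
    eapply Rle_lt_trans; [exact (dist_triangle (Int e t) y (z := Vtx (tgt e)) I)|].
    have := dist_Int_tgt e t. lra.
Qed.

Definition contains_y (e : edge G) : Prop := exists s, y = Int e s.

Definition top_dist (e : edge G) : R := Rmax (dist (Vtx (src e)) y) (dist (Vtx (tgt e)) y).

Definition descends_from (v : vert G) (e : edge G) : Prop :=
  (src e = v /\ dist (Vtx (tgt e)) y <= dist (Vtx v) y - len e) \/
  (tgt e = v /\ dist (Vtx (src e)) y <= dist (Vtx v) y - len e).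

(* The edges of a geodesic from [v] to [y]; the tags on them show that the edge added by
   [chain_from_cons] is new. *)
Definition chain_from (v : vert G) (C : list (edge G)) : Prop :=
  NoDup C /\
  (forall e, In e C -> contains_y e \/ top_dist e < dist (Vtx v) y \/ descends_from v e) /\
  Rmin r (dist (Vtx v) y) <= sumR mass C.

Lemma contains_y_dist_ends e : contains_y e ->
  dist (Vtx (src e)) y < len e /\ dist (Vtx (tgt e)) y < len e.
Proof.
  intros [s Ey]. have Hs := y_valid. rewrite Ey in Hs *. simpl in Hs.
  rewrite !(dist_sym (Vtx _)). have := dist_Int_src e s. have := dist_Int_tgt e s. lra.
Qed.

Section ChainStep.
Variables (v u : vert G) (e : edge G).
Hypothesis e_joins : (src e = v /\ tgt e = u) \/ (tgt e = v /\ src e = u).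
Hypothesis u_closer : dist (Vtx u) y <= dist (Vtx v) y - len e.

Lemma top_dist_joined : top_dist e = dist (Vtx v) y.
Proof.
  have := len_pos e. rewrite /top_dist /Rmax.
  destruct e_joins as [[-> ->]|[-> ->]]; destruct (Rle_dec _ _); lra.
Qed.

Lemma not_In_chain_from C : chain_from u C -> ~ In e C.
Proof.
  intros [_ [Htags _]] Hin. have := len_pos e. have := top_dist_joined.
  destruct (Htags e Hin) as [Hy|[Htop|[[Hs Hd]|[Ht Hd]]]].
  - have := contains_y_dist_ends Hy. have := dist_nonneg (p := Vtx u) I y_valid.
    destruct e_joins as [[-> ->]|[-> ->]]; lra.
  - lra.
  - destruct e_joins as [[_ E]|[E _]]; [|rewrite E in Hd; lra].
    by case: (no_loop (e := e)); congruence.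
  - destruct e_joins as [[E _]|[_ E]]; [rewrite E in Hd; lra|].
    by case: (no_loop (e := e)); congruence.
Qed.

Lemma chain_from_cons C : chain_from u C -> chain_from v (e :: C).
Proof.
  intros HC. have Hnew := not_In_chain_from HC. destruct HC as [HC1 [HC2 HC3]].
  have He := len_pos e.
  have Hu : 0 <= dist (Vtx u) y by apply dist_nonneg.
  have Hvu : dist (Vtx v) (Vtx u) <= len e.
  { destruct e_joins as [[<- <-]|[<- <-]]; [|rewrite dist_sym]; apply dist_src_tgt. }
  have Hv : dist (Vtx v) y <= len e + dist (Vtx u) y.
  { have := dist_triangle (Vtx v) y (z := Vtx u) I. lra. }
  split; [constructor; auto| split].
  - intros f [<-|Hf].
    + right; right. rewrite /descends_from. destruct e_joins as [[? ->]|[? ->]]; auto.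
    + destruct (HC2 f Hf) as [Hy|[Htop|[[Hs Hd]|[Ht Hd]]]]; [left; auto| right; left; lra| |];
        right; left; have := len_pos f;
        rewrite /top_dist ?Hs ?Ht /Rmax; destruct (Rle_dec _ _); lra.
  - rewrite sumR_cons. eapply Rle_trans.
    { apply (Rmin_le_split r Hu (Rlt_le _ _ He) Hv). }
    apply Rplus_le_compat; auto. apply mass_ge_near_end; [|lra].
    destruct e_joins as [[_ <-]|[_ <-]]; auto.
Qed.

End ChainStep.

Lemma chain_from_nil v : dist (Vtx v) y <= 0 -> chain_from v nil.
Proof.
  intros Hv. split; [constructor| split; [intros _ []|]].
  rewrite sumR_nil. have := Rmin_r r (dist (Vtx v) y). lra.
Qed.

Lemma chain_from_edge_of_y v e s l :
  y = Int e s -> end_dist y v l -> dist (Vtx v) y <= l -> chain_from v (e :: nil).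
Proof.
  intros Ey Hv Hdv. split; [constructor; [intros []| constructor]| split].
  - intros f [<-|[]]. left; exists s; auto.
  - rewrite sumR_cons sumR_nil Rplus_0_r.
    eapply Rle_trans; [apply Rle_min_compat_l, Hdv| apply (mass_ge_toward_end Ey Hv)].
Qed.

Lemma dist_le_walk_end a b L l : walk_len a b L -> end_dist y b l -> dist (Vtx a) y <= L + l.
Proof.
  intros Hw Hb. apply dist_le. right; exists a, b, 0, L, l; repeat split; auto. ring.
Qed.

Lemma chain_from_exists_bounded N v : dist (Vtx v) y <= INR N * min_len -> exists C, chain_from v C.
Proof.
  induction N as [|N IH] in v |- *; intros Hv.
  all: destruct (Rle_dec (dist (Vtx v) y) 0) as [H0|H0]; [exists nil; apply chain_from_nil, H0|].
  { simpl in Hv. lra. }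
  destruct (path_len_dist (Vtx v) y)
    as [[e [s [t [E _]]]]|[a [b [r1 [L0 [l [[Ea ->] [Hw [Hb HL]]]]]]]]]; [discriminate|].
  revert Ea Hb HL. destruct Hw as [u|e w L Hw|e w L Hw]; intros Ea Hb HL; subst.
  - case Ey : y Hb => [w|e s] Hb; [destruct Hb as [_ ->]; lra|].
    exists (e :: nil). rewrite -Ey in Hb. apply (chain_from_edge_of_y Ey Hb). lra.
  - have Hu := dist_le_walk_end Hw Hb. have Hm := min_len_le e.
    destruct (IH (tgt e)) as [C HC]; [rewrite S_INR in Hv; lra|].
    exists (e :: C). apply (chain_from_cons (u := tgt e)); auto. lra.
  - have Hu := dist_le_walk_end Hw Hb. have Hm := min_len_le e.
    destruct (IH (src e)) as [C HC]; [rewrite S_INR in Hv; lra|].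
    exists (e :: C). apply (chain_from_cons (u := src e)); auto. lra.
Qed.

Lemma chain_from_exists v : exists C, chain_from v C.
Proof.
  destruct (INR_archimed min_len (dist (Vtx v) y) min_len_pos) as [N HN].
  apply (chain_from_exists_bounded (N := N)). lra.
Qed.

Lemma mass_le_total e : mass e <= sumR mass (enum (edge G)).
Proof.
  have := sumR_mass_le (C := e :: nil) ltac:(constructor; [intros []| constructor]).
  by rewrite sumR_cons sumR_nil Rplus_0_r.
Qed.

Lemma ball_mass_ge_Vtx v : Rmin r (dist (Vtx v) y) <= sumR mass (enum (edge G)).
Proof.
  destruct (chain_from_exists v) as [C [HC [_ HCmass]]].
  eapply Rle_trans; [exact HCmass| apply sumR_mass_le, HC].
Qed.

Lemma ball_mass_ge_edge_of_y f s : contains_y f -> 0 < s < len f ->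
  Rmin r (dist (Int f s) y) <= sumR mass (enum (edge G)).
Proof.
  intros [sy Ey] Hs. eapply Rle_trans; [|apply (mass_le_total f)].
  have Hd := dist_Int_Int f sy s. rewrite -Ey in Hd.
  destruct (Rle_dec s sy).
  - rewrite Rabs_left1 in Hd; [|lra].
    eapply Rle_trans; [apply Rle_min_compat_l with (y := sy); lra|].
    apply (mass_ge_toward_end (a := src f) Ey). rewrite Ey; left; auto.
  - rewrite Rabs_right in Hd; [|lra].
    eapply Rle_trans; [apply Rle_min_compat_l with (y := len f - sy); lra|].
    apply (mass_ge_toward_end (a := tgt f) Ey). rewrite Ey; right; auto.
Qed.

Lemma ball_mass_ge_Int_via f s a b l :
  ~ contains_y f -> 0 < l <= len f -> (a = src f /\ b = tgt f) \/ (a = tgt f /\ b = src f) ->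
  dist (Int f s) y <= l + dist (Vtx a) y ->
  l + dist (Vtx a) y <= len f - l + dist (Vtx b) y ->
  Rmin r (dist (Int f s) y) <= sumR mass (enum (edge G)).
Proof.
  intros Hny Hl Hab Hza Hshorter.
  destruct (chain_from_exists a) as [C [HC [Htags HCmass]]].
  have Hnew : ~ In f C.
  { intros Hin. destruct (Htags f Hin) as [Hy|[Htop|[[Hs Hd]|[Ht Hd]]]]; [tauto| | |].
    - move: Htop. rewrite /top_dist.
      destruct Hab as [[<- _]|[<- _]]; [have := Rmax_l (dist (Vtx a) y) (dist (Vtx (tgt f)) y)
        | have := Rmax_r (dist (Vtx (src f)) y) (dist (Vtx a) y)]; lra.
    - destruct Hab as [[_ Eb]|[Ea _]]; [rewrite -Eb in Hd; lra|].
      by case: (no_loop (e := f)); congruence.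
    - destruct Hab as [[Ea _]|[_ Eb]]; [|rewrite -Eb in Hd; lra].
      by case: (no_loop (e := f)); congruence. }
  have Ha : 0 <= dist (Vtx a) y by apply dist_nonneg.
  eapply Rle_trans; [|apply (sumR_mass_le (C := f :: C)); constructor; auto].
  rewrite sumR_cons. eapply Rle_trans; [apply Rle_min_compat_l, Hza|].
  eapply Rle_trans; [apply (Rmin_le_split r Ha (Rlt_le _ _ (proj1 Hl)) (Rle_refl _))|].
  apply Rplus_le_compat; auto. apply mass_ge_near_end; [|lra].
  destruct Hab as [[-> _]|[-> _]]; auto.
Qed.

Lemma ball_mass_ge z : valid_point z -> Rmin r (dist z y) <= sumR mass (enum (edge G)).
Proof.
  destruct z as [v|f s]; intros Hz; [apply ball_mass_ge_Vtx|]. simpl in Hz.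
  destruct (classic (contains_y f)) as [Hy|Hny]; [apply ball_mass_ge_edge_of_y; auto|].
  have Hsrc : dist (Int f s) y <= s + dist (Vtx (src f)) y.
  { have := dist_triangle (Int f s) y (z := Vtx (src f)) I. have := dist_Int_src f s. lra. }
  have Htgt : dist (Int f s) y <= len f - s + dist (Vtx (tgt f)) y.
  { have := dist_triangle (Int f s) y (z := Vtx (tgt f)) I. have := dist_Int_tgt f s. lra. }
  destruct (Rle_dec (s + dist (Vtx (src f)) y) (len f - s + dist (Vtx (tgt f)) y)).
  - apply (ball_mass_ge_Int_via (a := src f) (b := tgt f) (l := s)); auto; lra.
  - apply (ball_mass_ge_Int_via (a := tgt f) (b := src f) (l := len f - s)); auto; lra.
Qed.

End BallMass.

(** * Deviating to the point [y] *)

Lemma update_same (x : profile G) i p : update x i p i = p.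
Proof. by rewrite /update Nat.eqb_refl. Qed.

Lemma update_other (x : profile G) i p j : j <> i -> update x i p j = x j.
Proof. intros H. rewrite /update. by move/Nat.eqb_neq: H => ->. Qed.

Lemma share_sole_closest n (x : profile G) i w : (i < n)%coq_nat ->
  (forall j, (j < n)%coq_nat -> j <> i -> dist (x i) w < dist (x j) w) -> share n x i w = 1.
Proof.
  intros Hi Hcloser. have Hin : In i (List.seq 0 n) by apply in_seq; lia.
  have Hmind : mind n x w = dist (x i) w.
  { apply Rle_antisym; [apply mind_le_dist, Hi|]. apply fold_Rmin_glb.
    - destruct (Nat.eq_dec 0 i) as [<-|Hne]; [lra| left; apply Hcloser; lia].
    - intros j Hj. apply in_seq in Hj. destruct (Nat.eq_dec j i) as [->|Hne]; [lra|].
      left; apply Hcloser; [lia| auto]. }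
  have Hclosest : closest_players n x w = i :: nil.
  { apply filter_singleton; [apply seq_NoDup| auto| |].
    - by rewrite Hmind; destruct (Req_EM_T _ _).
    - intros j Hj. apply in_seq in Hj. rewrite Hmind.
      destruct (Req_EM_T _ _) as [E|]; simpl; [intros _| discriminate].
      destruct (Nat.eq_dec j i) as [|Hne]; auto. have := Hcloser j ltac:(lia) Hne. lra. }
  have Halone : n_colocated n x i = 1%nat.
  { rewrite /n_colocated (filter_singleton (a := i)); auto; [apply seq_NoDup| |].
    - by destruct (point_eq_dec _ _).
    - intros j Hj. apply in_seq in Hj.
      destruct (point_eq_dec _ _) as [E|]; simpl; [intros _| discriminate].
      destruct (Nat.eq_dec j i) as [|Hne]; auto. have := Hcloser j ltac:(lia) Hne. rewrite E. lra. }
  rewrite /share /n_closest_locs Hclosest Halone Hmind /=.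
  destruct (Req_EM_T _ _) as [E|E]; simpl; [field| by case: E].
Qed.

(* The other players are at distance at least [2 r] from [y], hence farther than [y] from any
   point of the ball. *)
Lemma share_update_ball n (x : profile G) i y r w : valid_point w -> (i < n)%coq_nat ->
  2 * r <= mind n x y -> dist w y < r -> share n (update x i y) i w = 1.
Proof.
  intros Hw Hi Hmind Hwy. apply share_sole_closest; auto. intros j Hj Hji.
  rewrite update_same update_other // dist_sym.
  have := mind_le_dist x y Hj. have := dist_triangle (x j) y (z := w) Hw. lra.
Qed.

Lemma payoff_update_ge n (x : profile G) i y r :
  valid_point y -> valid_point (x i) -> (i < n)%coq_nat -> 0 < r -> 2 * r <= mind n x y ->
  r <= payoff n (update x i y) i.
Proof.
  intros Hy Hxi Hi Hr Hmind.
  have Hball := ball_mass_ge (r := r) (h := fun e t => share n (update x i y) i (Int e t)) Hy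
    (fun e => share_integrable _ e Hi) (fun e t _ => share_nonneg _ _ _ _)
    (fun e t Ht Hd => Req_le _ _ (esym (share_update_ball (w := Int e t) Ht Hi Hmind Hd))) Hxi.
  rewrite Rmin_left in Hball; [exact Hball|].
  have := mind_le_dist x y Hi. lra.
Qed.

End Network.

Theorem mainTheorem11 (G : network) (n : nat)
  (len_pos : forall e : edge G, 0 < len e)
  (no_loop : forall e : edge G, src e <> tgt e)
  (no_multi : forall e f : edge G,
      (src e = src f /\ tgt e = tgt f) \/ (src e = tgt f /\ tgt e = src f) -> e = f)
  (conn : connected_graph G)
  (no_deg2 : forall v : vert G, degree v <> 2%N)
  (n_pos : (0 < n)%N)
  (x : profile G) (Hx : nash_eq n x) :
  forall y : point G, valid_point y ->
    mind n x y <= 2 * total_length G / INR n.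
Proof.
  intros y Hy. destruct Hx as [Hvalid Hnash].
  have Hn : (0 < n)%coq_nat by apply/ltP.
  destruct (exists_payoff_le_average len_pos conn x Hn) as [i [Hi Hpoor]].
  have Havg_nonneg : 0 <= total_length G / INR n.
  { apply Rmult_le_pos; [|left; apply Rinv_0_lt_compat, lt_0_INR, Hn].
    apply sumR_ge0. intros e _. left; apply len_pos. }
  replace (2 * total_length G / INR n) with (2 * (total_length G / INR n)) by (rewrite /Rdiv; ring).
  apply Rnot_lt_le. intros Hfar.
  have Hgain := payoff_update_ge len_pos no_loop conn (r := mind n x y / 2) Hy
    (Hvalid i (introT ltP Hi)) Hi ltac:(lra) ltac:(lra).
  have := Hnash i y (introT ltP Hi) Hy. lra.
Qed.
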